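(* Let $X$ be a finite set of finite words and let $(w_i)_{i\in\mathbb{N}}$ be finite words with $\lim_{i\to\infty}|w_i| = \infty$. If every $w_i$ has an $X$-interpretation but no $w_i$ is a synchronizing word of $X$, then one can write $w_i = u_iv_i$ for each $i$ so that some subsequence of the sequence of shifted finite words $(u_i\,|\,v_i)_{i\in\mathbb{N}}$ converges to a bi-infinite word that has two different $X$-factorizations.
   Context: A word $w$ is a synchronizing word of $X$ if $w = w_1w_2$ for some words $w_1,w_2$ such that for every $v\in X^*$ of the form $v = pws$, we have $pw_1\in X^*$ and $w_2s\in X^*$. An $X$-interpretation of a finite word $w$ is a factorization $w = w_1w_2\cdots w_n$ where $w_1$ is a suffix of a word in $X$, $w_n$ is a prefix of a word in $X$, and $w_j\in X$ for $1<j<n$. The shifted word $(u\,|\,v)$ with $u = a_{-m}\cdots a_{-1}$, $v = a_0\cdots a_n$ is the map $\{-m,\dots,n\}\to$ letters, $k\mapsto a_k$. A sequence of shifted finite words $t_i:A_i\to$ letters converges to a bi-infinite word $t:\mathbb{Z}\to$ letters if for every $k\in\mathbb{Z}$ there is $L$ with $k\in A_i$ and $t_i(k)=t(k)$ for all $i\ge L$. An $X$-factorization of a bi-infinite word $t$ is a representation $t = \cdots x_{-2}x_{-1}p\,|\,q\,x_1x_2\cdots$ (with the bar marking position $0$) where all $x_j\in X$, $pq\in X$ and $q\neq\varepsilon$; it is recorded as the sequence $(\dots,x_{-2},x_{-1},p\,|\,q,x_1,x_2,\dots)$, and two factorizations are different if these sequences differ. *)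

From mathcomp Require Import all_boot all_algebra.
Set Implicit Arguments. Unset Strict Implicit. Unset Printing Implicit Defensive.

Section Words.
Variable A : eqType.
Implicit Types (X : seq (seq A)) (w : seq A).

Definition in_star X (v : seq A) : Prop :=
  exists ws : seq (seq A), (forall x, x \in ws -> x \in X) /\ flatten ws = v.

Definition synchronizing X w : Prop :=
  exists w1 w2 : seq A, w = w1 ++ w2 /\
    forall p s : seq A, in_star X (p ++ w ++ s) ->
      in_star X (p ++ w1) /\ in_star X (w2 ++ s).

Definition has_interpretation X w : Prop :=
  exists ws : seq (seq A),
    ws != [::] /\ flatten ws = w /\
    (exists2 x, x \in X & suffix (head [::] ws) x) /\
    (exists2 x, x \in X & prefix (last [::] ws) x) /\
    (forall j, 0 < j -> j.+1 < size ws -> nth [::] ws j \in X).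

(* The shifted word (u | v), as a partial map int -> A:
   position -(n+1) is the (n+1)-th letter of u from the right,
   position n >= 0 is the n-th letter of v (0-based). *)
Definition shifted (u v : seq A) (k : int) : option A :=
  match k with
  | Posz n => onth v n
  | Negz n => onth (rev u) n
  end.

Definition converges (ts : nat -> seq A * seq A) (t : int -> A) : Prop :=
  forall k : int, exists L : nat, forall i, L <= i ->
    shifted (ts i).1 (ts i).2 k = Some (t k).

Definition psum (ws : nat -> seq A) (n : nat) : nat := \sum_(i < n) size (ws i).

Definition concat_is (ws : nat -> seq A) (r : nat -> A) : Prop :=
  forall k : nat, exists n : nat,
    psum ws n <= k /\ onth (ws n) (k - psum ws n) = Some (r k).

(* X-factorization t = ... x_{-2} x_{-1} p | q x_1 x_2 ... , recorded as
   (xl, p, q, xr) with xl n = x_{-(n+1)} and xr n = x_{n+1}. *)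
Definition is_factorization X (t : int -> A)
    (xl : nat -> seq A) (p q : seq A) (xr : nat -> seq A) : Prop :=
  (forall n, xl n \in X) /\ (forall n, xr n \in X) /\
  p ++ q \in X /\ q != [::] /\
  concat_is (fun n => if n is n'.+1 then xr n' else q) (fun k => t (Posz k)) /\
  concat_is (fun n => if n is n'.+1 then rev (xl n') else rev p)
            (fun k => t (Negz k)).

Definition different_fact (xl : nat -> seq A) (p q : seq A) (xr : nat -> seq A)
    (xl' : nat -> seq A) (p' q' : seq A) (xr' : nat -> seq A) : Prop :=
  (exists n, xl n <> xl' n) \/ p <> p' \/ q <> q' \/ (exists n, xr n <> xr' n).

End Words.

From mathcomp Require Import all_boot all_algebra zify.
From Stdlib Require Import Classical ClassicalEpsilon.
Set Implicit Arguments. Unset Strict Implicit. Unset Printing Implicit Defensive.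

(* Read words along paths of the flower automaton of X, whose states are the
   pairs (x, o) with x in X and o < |x|: such a path traces an X-factorization,
   whose cuts are the positions where the offset o is 0. As w_i is not
   synchronizing, every position of w_i is off the cuts of some path reading
   w_i inside a word of X^*. Taking such a position near the middle of w_i and
   moving back to the start of its block (fewer than max |x| letters) gives a
   position c_i which is a cut of one path and not of another. Centred at c_i,
   these pairs of paths take values in a finite set, so a diagonal subsequence
   converges pointwise. The two limit paths read a common bi-infinite word t and
   yield two X-factorizations of t, which differ since p is empty for exactly
   one of them. *)

(** * Sequential compactness *)

Definition eventually (P : nat -> Prop) : Prop := exists M, forall i, M <= i -> P i.

Definition infinitely_often (P : nat -> Prop) : Prop := forall N, exists2 n, N <= n & P n.

Lemma eventually_and (P Q : nat -> Prop) :
  eventually P -> eventually Q -> eventually (fun i => P i /\ Q i).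
Proof.
move=> [M hP] [N hQ]; exists (maxn M N) => i; rewrite geq_max => /andP[iM iN].
by split; [apply: hP | apply: hQ].
Qed.

Lemma increasing_geq (phi : nat -> nat) :
  (forall i, phi i < phi i.+1) -> forall i, i <= phi i.
Proof. by move=> hphi; elim=> // i IH; apply: leq_ltn_trans IH (hphi i). Qed.

Lemma eventually_subseq (phi : nat -> nat) (P : nat -> Prop) :
  (forall i, phi i < phi i.+1) -> eventually P -> eventually (fun i => P (phi i)).
Proof.
move=> hphi [M hP]; exists M => i iM.
by apply: hP; apply: leq_trans iM (increasing_geq hphi i).
Qed.

Lemma infinitely_often_pigeonhole (T : eqType) (L : seq T) (P : nat -> Prop)
    (h : nat -> T) :
  infinitely_often P -> (forall n, P n -> h n \in L) ->
  exists v, infinitely_often (fun n => P n /\ h n = v).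
Proof.
elim: L P => [|a L IH] P hP hL; first by have [n _ /hL] := hP 0.
case: (classic (infinitely_often (fun n => P n /\ h n = a))) => [|not_a].
  by exists a.
have [N hN] : exists N, forall n, N <= n -> P n -> h n <> a.
  apply: NNPP => no_bound; apply: not_a => N; apply: NNPP => no_n.
  by apply: no_bound; exists N => n Nn Pn ha; apply: no_n; exists n.
have late_inf : infinitely_often (fun n => P n /\ N <= n).
  move=> M; have [n] := hP (maxn N M); rewrite geq_max => /andP[Nn Mn] Pn.
  by exists n.
have late_L : forall n, P n /\ N <= n -> h n \in L.
  move=> n [Pn Nn]; have := hL n Pn; rewrite inE => /orP[/eqP ha|//].
  by have := hN n Nn Pn ha.
have [v hv] := IH _ late_inf late_L.
by exists v => M; have [n Mn [[Pn _] hn]] := hv M; exists n.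
Qed.

Section FiniteValuedSequences.
Variables (T : eqType) (L : seq T) (g : nat -> nat -> T).
Hypothesis gL : forall i k, g i k \in L.

Definition frequent_value (P : nat -> Prop) (k : nat) : T :=
  epsilon (inhabits (g 0 0)) (fun v => infinitely_often (fun n => P n /\ g n k = v)).

Fixpoint agree_upto (k : nat) : nat -> Prop :=
  if k is k'.+1 then
    fun n => agree_upto k' n /\ g n k' = frequent_value (agree_upto k') k'
  else fun _ => True.

Lemma agree_upto_inf k : infinitely_often (agree_upto k).
Proof.
elim: k => [|k IH] /=; first by move=> N; exists N.
apply: (epsilon_spec (inhabits (g 0 0))
  (fun v => infinitely_often (fun n => agree_upto k n /\ g n k = v))).
by apply: infinitely_often_pigeonhole IH _ => n _.
Qed.

Lemma agree_upto_mono k k' n : k <= k' -> agree_upto k' n -> agree_upto k n.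
Proof.
elim: k' => [|k' IH]; first by rewrite leqn0 => /eqP->.
by rewrite leq_eqVlt => /orP[/eqP->//|]; rewrite ltnS => kk [/(IH kk)].
Qed.

Fixpoint diagonal (i : nat) : nat :=
  if i is i'.+1 then
    epsilon (inhabits 0) (fun n => diagonal i' < n /\ agree_upto i n)
  else 0.

Lemma diagonal_spec i : agree_upto i (diagonal i) /\ diagonal i < diagonal i.+1.
Proof.
have step j : diagonal j < diagonal j.+1 /\ agree_upto j.+1 (diagonal j.+1).
  apply: (epsilon_spec (inhabits 0) (fun n => diagonal j < n /\ agree_upto j.+1 n)).
  by have [n jn An] := agree_upto_inf j.+1 (diagonal j).+1; exists n.
case: i => [|i]; first by have [] := step 0.
by have [_ ?] := step i; have [? _] := step i.+1.
Qed.

Lemma finite_valued_subseq_converges :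
  exists phi, (forall i, phi i < phi i.+1) /\
  exists lim : nat -> T, forall k, eventually (fun i => g (phi i) k = lim k).
Proof.
exists diagonal; split; first by move=> i; case: (diagonal_spec i).
exists (fun k => frequent_value (agree_upto k) k) => k; exists k.+1 => i ki.
by have [/(agree_upto_mono ki) [_ ->] _] := diagonal_spec i.
Qed.

End FiniteValuedSequences.

Lemma subseq_converges (I : countType) (T : eqType) (L : seq T) (g : nat -> I -> T) :
  (forall k, eventually (fun i => g i k \in L)) ->
  exists phi, (forall i, phi i < phi i.+1) /\
  exists lim : I -> T, forall k, eventually (fun i => g (phi i) k = lim k).
Proof.
move=> gL.
pose g' i n := if unpickle n is Some k then
  (if g i k \in L then Some (g i k) else None) else None.
have g'L i n : g' i n \in None :: map Some L.
  rewrite /g'; case: unpickle => [k|]; last exact: mem_head.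
  by case: ifP => [hk|_]; rewrite inE ?mem_map ?hk ?orbT //; apply: Some_inj.
have [phi [hphi [lim' hlim']]] := finite_valued_subseq_converges g'L.
exists phi; split=> //; exists (fun k => odflt (g 0 k) (lim' (pickle k))) => k.
have [M hM] := eventually_and (eventually_subseq hphi (gL k)) (hlim' (pickle k)).
by exists M => i /hM [hk <-]; rewrite /g' pickleK hk.
Qed.

(** * Paths in the flower automaton *)

Section Onth.
Variable T : Type.

Lemma onth_some_lt (s : seq T) n x : onth s n = Some x -> n < size s.
Proof. by move=> e; rewrite -onthTE e. Qed.

Lemma onth_lt_some (s : seq T) n : n < size s -> exists x, onth s n = Some x.
Proof. by rewrite -onthTE; case: onth => [x _|//]; exists x. Qed.

Lemma onth_drop (s : seq T) m n : onth (drop m s) n = onth s (m + n).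
Proof. by rewrite !onthE map_drop nth_drop. Qed.

Lemma onth_take (s : seq T) m n : n < m -> onth (take m s) n = onth s n.
Proof. by move=> nm; rewrite !onthE map_take nth_take. Qed.

Lemma onth_rev (s : seq T) n : n < size s -> onth (rev s) n = onth s (size s - n.+1).
Proof. by move=> ns; rewrite !onthE map_rev nth_rev size_map. Qed.

End Onth.

Section FlowerAutomaton.
Variable A : eqType.

(* (x, o) is the state reached after the first o letters of x; after the last
   letter of x, a path may continue with any word, at offset 0. *)
Definition fstate := (seq A * nat)%type.

Definition fstep (a b : fstate) : Prop :=
  if a.2.+1 < size a.1 then b = (a.1, a.2.+1) else b.2 = 0.

Definition reads (X : seq (seq A)) (a : fstate) (x : A) : Prop :=
  a.1 \in X /\ onth a.1 a.2 = Some x.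

Definition fstates (X : seq (seq A)) : seq fstate :=
  [seq (y, o) | y <- X, o <- iota 0 (size y)].

Lemma reads_fstates X a x : reads X a x -> a \in fstates X.
Proof.
case: a => y o [yX yo]; apply/allpairsPdep.
by exists y, o; rewrite mem_iota (onth_some_lt yo).
Qed.

Lemma fstep_interior a b : fstep a b -> b.2 != 0 -> b = (a.1, a.2.+1).
Proof. by rewrite /fstep; case: ifP => // _ ->; rewrite eqxx. Qed.

Lemma psumS (f : nat -> seq A) n : psum f n.+1 = psum f n + size (f n).
Proof. by rewrite /psum big_ord_recr. Qed.

Lemma psum0 (f : nat -> seq A) : psum f 0 = 0.
Proof. by rewrite /psum big_ord0. Qed.

Lemma psum_bracket (f : nat -> seq A) k :
  (forall n, 0 < size (f n)) -> exists n, psum f n <= k < psum f n.+1.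
Proof.
move=> f_gt0; elim: k => [|k [n /andP[lo hi]]].
  by exists 0; rewrite psumS psum0 f_gt0.
case: (ltnP k.+1 (psum f n.+1)) => hk; first by exists n; rewrite hk andbT ltnW.
by exists n.+1; rewrite (psumS f n.+1); have := f_gt0 n.+1; lia.
Qed.

Lemma concat_is_blocks (f : nat -> seq A) (r : nat -> A) :
  (forall n, 0 < size (f n)) ->
  (forall n j, j < size (f n) -> onth (f n) j = Some (r (psum f n + j))) ->
  concat_is f r.
Proof.
move=> f_gt0 f_r k; have [n /andP[lo hi]] := psum_bracket k f_gt0.
by exists n; split=> //; rewrite f_r ?subnKC //; rewrite psumS in hi; lia.
Qed.

Lemma concat_is_ext (f g : nat -> seq A) r :
  concat_is f r -> f =1 g -> concat_is g r.
Proof.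
move=> h fg k; have [n [h1 h2]] := h k; exists n.
have -> : psum g n = psum f n by apply: eq_bigr => i _; rewrite fg.
by rewrite -fg.
Qed.

Lemma concat_is_cons_nil (f : nat -> seq A) r :
  concat_is f r -> concat_is (fun n => if n is n'.+1 then f n' else [::]) r.
Proof.
move=> h k; have [n [h1 h2]] := h k; exists n.+1.
by rewrite /psum big_ord_recl add0n.
Qed.

Section RightInfinitePath.
Variables (P : seq A -> Prop) (s : nat -> fstate) (r : nat -> A).
Hypothesis s_reads : forall k, P (s k).1 /\ onth (s k).1 (s k).2 = Some (r k).
Hypothesis s_step : forall k, fstep (s k) (s k.+1).

Let s_lt k : (s k).2 < size (s k).1.
Proof. exact: onth_some_lt (s_reads k).2. Qed.

Lemma path_within k d :
  (s k).2 + d < size (s k).1 -> s (k + d) = ((s k).1, (s k).2 + d).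
Proof.
elim: d => [|d IH] hd; first by rewrite !addn0 -surjective_pairing.
have := s_step (k + d); rewrite IH; last by lia.
by rewrite /fstep /= -addnS hd !addnS => ->.
Qed.

Lemma path_leaves_word k : (s (k + (size (s k).1 - (s k).2))).2 = 0.
Proof.
have lt := s_lt k; set d := size (s k).1 - (s k).2 - 1.
have := s_step (k + d); rewrite path_within /fstep /=; last by lia.
rewrite ifF; last by apply/negbTE; lia.
by rewrite -addnS (_ : d.+1 = size (s k).1 - (s k).2) //; lia.
Qed.

Fixpoint word_start (n : nat) : nat :=
  if n is n'.+1 then word_start n' + size (s (word_start n')).1
  else size (s 0).1 - (s 0).2.

Lemma word_start_boundary n : (s (word_start n)).2 = 0.
Proof.
elim: n => [|n IH] /=; first exact: (path_leaves_word 0).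
by have := path_leaves_word (word_start n); rewrite IH subn0.
Qed.

Lemma right_path_factorization : exists xr, (forall n, P (xr n)) /\
  concat_is (fun n => if n is n'.+1 then xr n' else drop (s 0).2 (s 0).1) r.
Proof.
exists (fun n => (s (word_start n)).1); split; first by move=> n; case: (s_reads (word_start n)).
set f := fun n => _.
have psum_f n : psum f n.+1 = word_start n.
  elim: n => [|n IH]; first by rewrite psumS psum0 /= size_drop.
  by rewrite psumS IH.
apply: concat_is_blocks => [[|n]|[|n] j]; rewrite /f ?size_drop; try by have := s_lt 0; lia.
- by have := s_lt (word_start n); lia.
- move=> hj; rewrite psum0 onth_drop /=.
  by have := s_reads j; rewrite -[j]add0n path_within /=; [case | lia].
- rewrite psum_f => hj; have := s_reads (word_start n + j).
  by rewrite path_within word_start_boundary /=; [case | lia].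
Qed.

End RightInfinitePath.

(* Read right to left through the reversed words, the negative half of a
   bi-infinite path is again a path. *)
Definition rev_fstate (a : fstate) : fstate := (rev a.1, size a.1 - a.2.+1).

Lemma onth_rev_fstate a : a.2 < size a.1 ->
  onth (rev_fstate a).1 (rev_fstate a).2 = onth a.1 a.2.
Proof.
case: a => y o /= oy; rewrite onth_rev; last by lia.
by congr onth; lia.
Qed.

Lemma fstep_rev a b : a.2 < size a.1 -> b.2 < size b.1 ->
  fstep a b -> fstep (rev_fstate b) (rev_fstate a).
Proof.
case: a => x o; case: b => y o'; rewrite /fstep /rev_fstate /= size_rev => ox oy.
case: ifP => hx; last by move=> ->; rewrite ifF; lia.
by case=> -> ->; rewrite ifT; [congr pair; lia | lia].
Qed.

Definition flower_bipath (X : seq (seq A)) (s : int -> fstate) (t : int -> A) :=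
  forall k, reads X (s k) (t k) /\ fstep (s k) (s (k + 1)%R).

Section BiInfinitePath.
Variables (X : seq (seq A)) (s : int -> fstate) (t : int -> A).
Hypothesis s_bipath : flower_bipath X s t.

Let s_reads k : reads X (s k) (t k) := (s_bipath k).1.
Let s_step k : fstep (s k) (s (k + 1)%R) := (s_bipath k).2.

Lemma right_half : exists xr, (forall n, xr n \in X) /\
  concat_is (fun n => if n is n'.+1 then xr n' else drop (s 0).2 (s 0).1)
            (fun k => t (Posz k)).
Proof.
apply: (right_path_factorization (P := fun y => y \in X)
  (s := fun k => s (Posz k)) (r := fun k => t (Posz k))) => k.
  exact: s_reads.
by have := s_step (Posz k); rewrite -addn1 -PoszD addn1.
Qed.

Lemma left_half : exists xl, (forall n, xl n \in X) /\
  concat_is (fun n => if n is n'.+1 then rev (xl n') else rev (take (s 0).2 (s 0).1))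
            (fun k => t (Negz k)).
Proof.
have lt k : (s k).2 < size (s k).1 := onth_some_lt (s_reads k).2.
have [||xr [xrX hxr]] := right_path_factorization (P := fun y => rev y \in X)
  (s := fun k => rev_fstate (s (Negz k))) (r := fun k => t (Negz k)).
- by move=> k; have [yX yo] := s_reads (Negz k); rewrite onth_rev_fstate // revK.
- move=> k; apply: fstep_rev; [exact: lt | exact: lt |].
  by have := s_step (Negz k.+1); rewrite (_ : (Negz k.+1 + 1)%R = Negz k) //; lia.
move: hxr; rewrite /rev_fstate /= drop_rev.
have := s_step (Negz 0); rewrite (_ : (Negz 0 + 1)%R = 0) //.
have := s_reads (Negz 0); have := lt (Negz 0).
case: (s (Negz 0)) => y o /= oy [yX _].
rewrite /fstep /=; case: ifP => hy.
  move=> -> hxr; rewrite subKn // in hxr.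
  exists (fun n => rev (xr n)); split=> //.
  by apply: concat_is_ext hxr _ => -[|n] //=; rewrite revK.
move=> o0 hxr; rewrite o0 take0.
have o_last : size y - (size y - o.+1) = size y by lia.
rewrite o_last take_size in hxr.
exists (fun n => if n is n'.+1 then rev (xr n') else y); split; first by case.
by apply: concat_is_ext (concat_is_cons_nil hxr) _ => -[|[|n]] //=; rewrite revK.
Qed.

Lemma bipath_factorization : exists xl xr,
  is_factorization X t xl (take (s 0).2 (s 0).1) (drop (s 0).2 (s 0).1) xr.
Proof.
have [xl [xlX hxl]] := left_half; have [xr [xrX hxr]] := right_half.
have [s0X s0_lt] := s_reads 0; have {}s0_lt := onth_some_lt s0_lt.
exists xl, xr; split=> //; split=> //; rewrite cat_take_drop; split=> //.
by split; [rewrite -size_eq0 size_drop; lia | split].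
Qed.

End BiInfinitePath.

End FlowerAutomaton.

(** * Paths through a non-synchronizing word *)

Section FinitePaths.
Variables (A : eqType) (X : seq (seq A)).
Local Notation fstate := (fstate A).

Definition flower_path (w : seq A) (sg : nat -> fstate) : Prop :=
  (forall j x, onth w j = Some x -> reads X (sg j) x) /\
  (forall j, j.+1 < size w -> fstep (sg j) (sg j.+1)).

Lemma flower_path_back w sg j : flower_path w sg -> j < size w ->
  (sg j).2 <= j -> (sg (j - (sg j).2)).2 = 0.
Proof.
move=> [_ sg_step]; move e: (sg j).2 => o.
elim: o j e => [|o IH] [|j] e jw oj; rewrite ?subn0 //.
have := fstep_interior (sg_step j jw); rewrite e => /(_ isT) sgS.
by rewrite subSS IH ?(ltnW jw) //; move: e; rewrite sgS => -[].
Qed.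

Fixpoint locate (ws : seq (seq A)) (j : nat) : fstate :=
  if ws is y :: ws' then
    if j < size y then (y, j) else locate ws' (j - size y)
  else ([::], 0).

Lemma locate_reads ws j : j < size (flatten ws) ->
  (locate ws j).1 \in ws /\ onth (locate ws j).1 (locate ws j).2 = onth (flatten ws) j.
Proof.
elim: ws j => [|y ws IH] j //=; rewrite size_cat onth_cat.
case: ifP => jy /=; first by rewrite mem_head.
rewrite -ltn_subLR; last by rewrite leqNgt jy.
by move=> /IH [h1 h2]; rewrite inE h1 orbT.
Qed.

Lemma locate0 ws : 0 < size (flatten ws) -> (locate ws 0).2 = 0.
Proof.
elim: ws => [|y ws IH] //=; rewrite size_cat; case: ifP => // y0.
by have -> : size y = 0 by lia.
Qed.

Lemma locate_step ws j : j.+1 < size (flatten ws) -> fstep (locate ws j) (locate ws j.+1).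
Proof.
elim: ws j => [|y ws IH] j //=; rewrite size_cat => jws.
case: ifP => jy; rewrite /fstep /=.
  have [// | yj] := ltnP j.+1 (size y).
  rewrite (_ : j.+1 - size y = 0); last by lia.
  by apply: locate0; lia.
have -> : (j.+1 < size y) = false by apply/negbTE; lia.
by rewrite subSn; [apply: IH | ]; lia.
Qed.

Lemma locate_cut_in_star ws j : {subset ws <= X} -> j < size (flatten ws) ->
  (locate ws j).2 = 0 -> in_star X (take j (flatten ws)) /\ in_star X (drop j (flatten ws)).
Proof.
elim: ws j => [|y ws IH] j //= wsX; rewrite size_cat take_cat drop_cat => jws.
have yX : y \in X by apply: wsX; rewrite mem_head.
have wsX' : {subset ws <= X} by move=> x xws; apply: wsX; rewrite inE xws orbT.
case: ifP => jy /=.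
  move=> j0; rewrite j0 take0 drop0; split; first by exists [::].
  by exists (y :: ws).
move=> j0; have [|[ws1 [ws1X e1]] [ws2 [ws2X e2]]] := IH (j - size y) wsX' _ j0.
  by lia.
split; last by exists ws2.
exists (y :: ws1); split; last by rewrite /= e1.
by move=> x; rewrite inE => /orP[/eqP-> // | /ws1X].
Qed.

Lemma locate_path ws p w s : {subset ws <= X} -> flatten ws = p ++ w ++ s ->
  flower_path w (fun j => locate ws (size p + j)).
Proof.
move=> wsX e; split=> [j x wj | j jw]; last first.
  by rewrite addnS; apply: locate_step; rewrite e !size_cat; lia.
have jw := onth_some_lt wj.
have [|yws yj] := @locate_reads ws (size p + j); first by rewrite e !size_cat; lia.
split; first exact: wsX.
by rewrite yj e onth_cat ifF ?addKn ?onth_cat ?jw //; lia.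
Qed.

Lemma nonsync_path w c : ~ synchronizing X w -> c < size w ->
  exists sg, flower_path w sg /\ (sg c).2 != 0.
Proof.
move=> nsync cw; apply: NNPP => no_path; apply: nsync.
exists (take c w), (drop c w); split; first by rewrite cat_take_drop.
move=> p s [ws [wsX e]].
have cut : (locate ws (size p + c)).2 = 0.
  apply/eqP; apply: contra_notT no_path => nz.
  by exists (fun j => locate ws (size p + j)); split; first exact: locate_path e.
have e1 : take (size p + c) (flatten ws) = p ++ take c w.
  by rewrite e take_cat ltnNge leq_addr /= addKn takel_cat // ltnW.
have e2 : drop (size p + c) (flatten ws) = drop c w ++ s.
  by rewrite e drop_cat ltnNge leq_addr /= addKn drop_cat cw.
rewrite -e1 -e2; apply: locate_cut_in_star wsX _ cut.
by rewrite e !size_cat; lia.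
Qed.

Definition ambiguous_cut (w : seq A) (c : nat) (sg sg' : nat -> fstate) :=
  [/\ flower_path w sg, flower_path w sg', (sg c).2 = 0 & (sg' c).2 != 0].

Lemma ambiguous_cut_near Mx w m : (forall x, x \in X -> size x <= Mx) ->
  ~ synchronizing X w -> Mx <= m < size w ->
  exists c sg sg', c <= m <= c + Mx /\ ambiguous_cut w c sg sg'.
Proof.
move=> X_Mx nsync /andP[Mx_m mw].
have [sg [sg_path sg_nz]] := nonsync_path nsync mw.
have [x wm] := onth_lt_some mw.
have [/X_Mx xMx o_lt] := sg_path.1 m x wm; have {}o_lt := onth_some_lt o_lt.
have [|sg' [sg'_path sg'_nz]] := nonsync_path (c := m - (sg m).2) nsync; first by lia.
exists (m - (sg m).2), sg, sg'; split; first by lia.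
by split=> //; apply: (flower_path_back sg_path mw); lia.
Qed.

End FinitePaths.

(** * Passing to the limit *)

Section Limits.
Variables (A : eqType) (X : seq (seq A)).
Local Notation fstate := (fstate A).

Lemma ambiguous_cuts_far_from_ends (w : nat -> seq A) :
  (forall N, eventually (fun i => N <= size (w i))) ->
  (forall i, ~ synchronizing X (w i)) ->
  exists c (sg sg' : nat -> nat -> fstate), forall N, eventually (fun i =>
    [/\ N <= c i, c i + N < size (w i) & ambiguous_cut X (w i) (c i) (sg i) (sg' i)]).
Proof.
move=> w_grow nsync.
pose Mx := \max_(x <- X) size x.
have X_Mx x : x \in X -> size x <= Mx by move=> xX; exact: leq_bigmax_seq.
have [|f hf] := choice (fun i (d : nat * (nat -> fstate) * (nat -> fstate)) =>
  Mx.*2 < size (w i) -> d.1.1 <= (size (w i))./2 <= d.1.1 + Mx /\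
                        ambiguous_cut X (w i) d.1.1 d.1.2 d.2).
  move=> i; case: (ltnP Mx.*2 (size (w i))) => long.
    have [|c [sg [sg' []]]] := ambiguous_cut_near (m := (size (w i))./2) X_Mx (nsync i).
      by lia.
    by exists (c, sg, sg').
  by exists (0, fun _ => ([::], 0), fun _ => ([::], 0)) => short; lia.
exists (fun i => (f i).1.1), (fun i => (f i).1.2), (fun i => (f i).2) => N.
have [M hM] := w_grow (N + Mx).*2.+1.
exists M => i /hM long; have [|near amb] := hf i; first by lia.
by split=> //; lia.
Qed.

(* The position in w of the letter at index k of (take c w | drop c w); it is
   meaningful only when c + k >= 0. *)
Definition cut_pos (c : nat) (k : int) : nat := `|(c%:Z + k)%R|%N.

Lemma cut_pos0 c : cut_pos c 0 = c.
Proof. by rewrite /cut_pos; lia. Qed.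

Lemma shifted_take_drop (w : seq A) c k : c <= size w -> (0 <= c%:Z + k)%R ->
  shifted (take c w) (drop c w) k = onth w (cut_pos c k).
Proof.
rewrite /cut_pos; case: k => n cw /= hk; first by rewrite onth_drop; congr onth; lia.
rewrite onth_rev size_takel //; last by lia.
by rewrite onth_take; [congr onth | ]; lia.
Qed.

Lemma flower_path_near_cut w c sg k x : flower_path X w sg ->
  `|k| < c -> c + `|k|.+1 < size w -> onth w (cut_pos c k) = Some x ->
  reads X (sg (cut_pos c k)) x /\ fstep (sg (cut_pos c k)) (sg (cut_pos c (k + 1)%R)).
Proof.
move=> [sg_reads sg_step] kc ckw wx; split; first exact: sg_reads.
by rewrite (_ : cut_pos c (k + 1) = (cut_pos c k).+1); rewrite /cut_pos; [apply: sg_step|]; lia.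
Qed.

Section AmbiguousCuts.
Variables (w : nat -> seq A) (c : nat -> nat) (sg sg' : nat -> nat -> fstate).
Hypothesis cuts : forall N, eventually (fun i =>
  [/\ N <= c i, c i + N < size (w i) & ambiguous_cut X (w i) (c i) (sg i) (sg' i)]).

Definition cut_states (i : nat) (k : int) : fstate * fstate :=
  (sg i (cut_pos (c i) k), sg' i (cut_pos (c i) k)).

Lemma cut_states_window k : eventually (fun i =>
  exists2 x, shifted (take (c i) (w i)) (drop (c i) (w i)) k = Some x &
  [/\ reads X (cut_states i k).1 x, reads X (cut_states i k).2 x,
      fstep (cut_states i k).1 (cut_states i (k + 1)%R).1 &
      fstep (cut_states i k).2 (cut_states i (k + 1)%R).2]).
Proof.
have [M hM] := cuts `|k|.+1; exists M => i /hM [kc ckw [p p' _ _]].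
have [|x wx] := @onth_lt_some _ (w i) (cut_pos (c i) k); first by rewrite /cut_pos; lia.
have [r st] := flower_path_near_cut p kc ckw wx.
have [r' st'] := flower_path_near_cut p' kc ckw wx.
by exists x; [rewrite shifted_take_drop //; lia | split].
Qed.

Lemma cut_states_subseq : exists phi, (forall i, phi i < phi i.+1) /\
  exists lim, forall k, eventually (fun i => cut_states (phi i) k = lim k).
Proof.
apply: (subseq_converges (L := [seq (a, b) | a <- fstates X, b <- fstates X])) => k.
have [M hM] := cut_states_window k; exists M => i /hM [x _ [r r' _ _]].
apply/allpairsP; exists (cut_states i k).
by split; [exact: reads_fstates r | exact: reads_fstates r' | case: cut_states].
Qed.

Lemma limit_window phi lim : (forall i, phi i < phi i.+1) ->
  (forall k, eventually (fun i => cut_states (phi i) k = lim k)) ->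
  forall k, eventually (fun i =>
    exists2 x, shifted (take (c (phi i)) (w (phi i))) (drop (c (phi i)) (w (phi i))) k = Some x &
    [/\ reads X (lim k).1 x, reads X (lim k).2 x,
        fstep (lim k).1 (lim (k + 1)%R).1 & fstep (lim k).2 (lim (k + 1)%R).2]).
Proof.
move=> phi_incr lim_cs k.
have [M hM] := eventually_and (lim_cs k)
  (eventually_and (lim_cs (k + 1)%R) (eventually_subseq phi_incr (cut_states_window k))).
by exists M => i /hM [<- [<-]].
Qed.

Lemma ambiguous_cuts_limit : exists phi, (forall i, phi i < phi i.+1) /\
  exists t s s',
    converges (fun i => (take (c (phi i)) (w (phi i)), drop (c (phi i)) (w (phi i)))) t /\
    [/\ flower_bipath X s t, flower_bipath X s' t, (s 0).2 = 0 & (s' 0).2 != 0].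
Proof.
have [phi [phi_incr [lim lim_cs]]] := cut_states_subseq.
have window := limit_window phi_incr lim_cs.
pose s k := (lim k).1; pose s' k := (lim k).2.
have [x0 _] : exists x0 : A, True.
  by have [M /(_ M (leqnn M)) [x _ _]] := window 0; exists x.
pose t k := nth x0 (s k).1 (s k).2.
have lim_reads k x : reads X (s k) x -> x = t k by move=> [_ /(onth_nth x0)].
exists phi; split=> //; exists t, s, s'; split.
  move=> k; have [M hM] := window k; exists M => i /hM [x sh [r _ _ _]].
  by rewrite /= sh (lim_reads k x r).
have [M /(_ M (leqnn M)) [cs0 [_ _ [_ _ b nb]]]] :=
  eventually_and (lim_cs 0) (eventually_subseq phi_incr (cuts 0)).
split=> [k | k | | ]; try by rewrite /s /s' -cs0 /= cut_pos0.
- by have [M' /(_ M' (leqnn M')) [x _ [r _ st _]]] := window k; rewrite -(lim_reads k x r).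
- by have [M' /(_ M' (leqnn M')) [x _ [r r' _ st']]] := window k; rewrite -(lim_reads k x r).
Qed.

End AmbiguousCuts.

End Limits.

Theorem lemma28 (A : eqType) (X : seq (seq A)) (w : nat -> seq A) :
  (forall N : nat, exists M : nat, forall i, M <= i -> N <= size (w i)) ->
  (forall i, has_interpretation X (w i)) ->
  (forall i, ~ synchronizing X (w i)) ->
  exists u v : nat -> seq A,
    (forall i, w i = u i ++ v i) /\
    exists phi : nat -> nat, (forall i, phi i < phi i.+1) /\
    exists t : int -> A,
      converges (fun i => (u (phi i), v (phi i))) t /\
      exists (xl : nat -> seq A) (p q : seq A) (xr : nat -> seq A)
             (xl' : nat -> seq A) (p' q' : seq A) (xr' : nat -> seq A),
        is_factorization X t xl p q xr /\
        is_factorization X t xl' p' q' xr' /\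
        different_fact xl p q xr xl' p' q' xr'.
Proof.
move=> w_grow _ nsync.
have [c [sg [sg' cuts]]] := ambiguous_cuts_far_from_ends w_grow nsync.
exists (fun i => take (c i) (w i)), (fun i => drop (c i) (w i)).
split; first by move=> i; rewrite cat_take_drop.
have [phi [phi_incr [t [s [s' [conv [bs bs' s0 s'0]]]]]]] := ambiguous_cuts_limit cuts.
exists phi; split=> //; exists t; split=> //.
have [xl [xr fact]] := bipath_factorization bs.
have [xl' [xr' fact']] := bipath_factorization bs'.
do 8 eexists; split; first exact: fact.
split; first exact: fact'.
have s'0_lt := onth_some_lt (bs' 0).1.2.
right; left; rewrite s0 take0 => /(congr1 size); rewrite size_takel; last exact: ltnW.
by move=> e; rewrite -e in s'0.
Qed.
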